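(* Let $\mathcal{E}$ be a quantum channel on $\mathbb{C}^d$, $M \ge 2$ and $N \ge 2$ integers. Let $\hat V_1,\dots,\hat V_M$ be i.i.d. from a unitary $4$-design on $\mathbb{C}^d$, $|\psi_i\rangle = \hat V_i|0\rangle$, $f_i := f_{\mathcal{E}}(\psi_i)$, and, conditional on $\psi_i$, let $X_{i,1},\dots,X_{i,N}\in\{0,1\}$ be i.i.d. Bernoulli($f_i$), with the data for different $i$ independent. Let $\hat F = \frac{1}{MN}\sum_{i=1}^M\sum_{s=1}^N X_{i,s}$. Then for every $\epsilon > 0$, $$\Pr\bigl[|\hat F - F| \ge \epsilon\bigr] \le \frac{D^2}{M\epsilon^2} + \frac{1}{4MN\epsilon^2}.$$ In particular, for any $\delta\in(0,1)$, if $\frac{D^2}{M} + \frac{1}{4MN} \le \delta\epsilon^2$, then $\Pr\bigl[|\hat F - F| \le \epsilon\bigr] \ge 1-\delta$.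
   Context: $f_{\mathcal{E}}(\psi) := \langle\psi|\mathcal{E}(|\psi\rangle\langle\psi|)|\psi\rangle$. With $d\psi$ the Haar-induced probability measure on unit vectors of $\mathbb{C}^d$, $F := \int d\psi\, f_{\mathcal{E}}(\psi)$ and $D^2 := \int d\psi\, f_{\mathcal{E}}(\psi)^2 - F^2$. $|0\rangle$ is a fixed unit vector. A unitary $t$-design is a probability distribution on $U(d)$ such that for all $k\le t$ and all operators $\hat O$ on $(\mathbb{C}^d)^{\otimes k}$, $\mathbb{E}[\hat V^{\otimes k}\hat O\hat V^{\dagger\otimes k}] = \int \hat U^{\otimes k}\hat O\hat U^{\dagger\otimes k}\,d\hat U$ with $d\hat U$ the Haar measure. *)

From HB Require Import structures.
From mathcomp Require Import all_boot all_order all_algebra.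
From mathcomp Require Import all_classical all_reals all_analysis.
From mathcomp Require Import complex mxtens.

Set Implicit Arguments.
Unset Strict Implicit.
Unset Printing Implicit Defensive.

Import Order.TTheory GRing.Theory Num.Theory.
Import numFieldTopology.Exports numFieldNormedType.Exports.
Local Open Scope classical_set_scope.
Local Open Scope ring_scope.

Section QDefs.
Variable R : realType.
Local Notation C := R[i].

Definition mxdag m n (A : 'M[C]_(m, n)) : 'M[C]_(n, m) :=
  (map_mx (@conjc R) A)^T.

Definition unit_vector n (z : 'cV[C]_n) : Prop := (mxdag z *m z) 0 0 = 1.

Definition is_channel d (E : 'M[C]_d -> 'M[C]_d) : Prop :=
  exists (K : nat) (A : 'I_K -> 'M[C]_d),
    (forall rho, E rho = \sum_(k < K) (A k *m rho *m mxdag (A k))) /\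
    \sum_(k < K) (mxdag (A k) *m A k) = 1%:M.

(* f_E(psi) = <psi| E(|psi><psi|) |psi>  (a real number for a channel;
   we take its real part) *)
Definition fE d (E : 'M[C]_d -> 'M[C]_d) (psi : 'cV[C]_d) : R :=
  complex.Re ((mxdag psi *m E (psi *m mxdag psi) *m psi) 0 0).

Definition remb m n (A : 'M[C]_(m, n)) : 'M[R]_(m, n + n) :=
  row_mx (map_mx (@complex.Re R) A) (map_mx (@complex.Im R) A).

(* Borel sigma-algebra on real matrices (= on complex matrices via remb) *)
Definition mxborel m n : set (set 'M[R]_(m, n)) := <<s @open (matrix R m n) >>.

Section RandomMatrices.
Context {dT : measure_display} {T : measurableType dT}.

Definition rmeas m n (Y : T -> 'M[C]_(m, n)) : Prop :=
  forall B, mxborel B -> measurable ((fun w => remb (Y w)) @^-1` B).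

Definition sigmaY m n (Y : T -> 'M[C]_(m, n)) : set (set T) :=
  [set (fun w => remb (Y w)) @^-1` B | B in @mxborel m (n + n)].

Definition same_law (P : probability T R) m n (Y1 Y2 : T -> 'M[C]_(m, n)) :=
  forall B, mxborel B ->
    P ((fun w => remb (Y1 w)) @^-1` B) = P ((fun w => remb (Y2 w)) @^-1` B).

Definition mutually_independent (I : finType) (P : probability T R)
    (G : I -> set (set T)) : Prop :=
  forall A : I -> set T, (forall i, G i (A i)) ->
    P (\bigcap_(i in [set: I]) A i) = (\prod_(i : I) P (A i))%E.

(* conditionally on the sigma-algebra Gs, X_1..X_N are i.i.d. Bernoulli(f) *)
Definition cond_iid_bernoulli (P : probability T R) (Gs : set (set T))
    (f : T -> R) N (X : 'I_N -> T -> bool) : Prop :=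
  forall B, Gs B -> forall x : {ffun 'I_N -> bool},
    P (B `&` [set w | forall s, X s w = x s]) =
    (\int[P]_(w in B) (\prod_(s < N) (if x s then f w else 1 - f w))%:E)%E.
End RandomMatrices.

(* W : T' -> U(d) is Haar distributed under Q: values in U(d), Borel
   measurable, and its law is left-invariant (the Haar probability measure
   is the unique left-invariant probability measure on U(d)). *)
Definition haar_rv {dQ : measure_display} {T' : measurableType dQ}
    (Q : probability T' R) d (W : T' -> 'M[C]_d) : Prop :=
  (forall w, W w \is unitarymx) /\ rmeas W /\
  forall A : 'M[C]_d, A \is unitarymx -> forall B, mxborel B ->
    Q ((fun w => remb (A *m W w)) @^-1` B) = Q ((fun w => remb (W w)) @^-1` B).

(* the law of V (under P) is a unitary t-design, i.e. for every k <= t and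
   every operator O on (C^d)^{(x)k}, E[V^{(x)k} O V^{dag (x)k}] equals the
   Haar average (computed with a Haar-distributed W under Q); the matrix
   expectation is taken entrywise (real and imaginary parts). *)
Definition unitary_design (t : nat)
    {dT : measure_display} {T : measurableType dT} (P : probability T R)
    {dQ : measure_display} {T' : measurableType dQ} (Q : probability T' R)
    d (V : T -> 'M[C]_d) (W : T' -> 'M[C]_d) : Prop :=
  forall k, (k <= t)%N -> forall (O : 'M[C]_(d ^ k)) (a b : 'I_(d ^ k)),
    (\int[P]_x (complex.Re ((V x ^t k *m O *m (mxdag (V x)) ^t k) a b))%:E =
     \int[Q]_y (complex.Re ((W y ^t k *m O *m (mxdag (W y)) ^t k) a b))%:E)%E /\
    (\int[P]_x (complex.Im ((V x ^t k *m O *m (mxdag (V x)) ^t k) a b))%:E =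
     \int[Q]_y (complex.Im ((W y ^t k *m O *m (mxdag (W y)) ^t k) a b))%:E)%E.

End QDefs.

(* For each round i, conditionally on psi_i the outcomes X_{i,s} are i.i.d.
   Bernoulli(f_i), so E[X_{i,s}] = E[f_i] and E[X_{i,s} X_{i,t}] = E[f_i^2] for
   s <> t, while outcomes of different rounds are independent.  In Kraus form,
   f_E(V|0>) and its square are polynomials of degree 2 and 4 in the entries of
   V and its conjugate, i.e. entries of (V|0><0|V^dag)^{(x)k} for k = 2, 4, so
   the 4-design property gives E[f_i] = F and E[f_i^2] = F^2 + D^2.  Hence
   Var(Fhat) = D^2/M + (F - F^2 - D^2)/(MN) <= D^2/M + 1/(4MN), and both
   claims follow from Chebyshev's inequality. *)

From HB Require Import structures.
From mathcomp Require Import all_boot all_order all_algebra.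
From mathcomp Require Import all_classical all_reals all_analysis.
From mathcomp Require Import complex mxtens.
From mathcomp Require Import lra ring spectral.

Set Implicit Arguments.
Unset Strict Implicit.
Unset Printing Implicit Defensive.

Import Order.TTheory GRing.Theory Num.Theory.
Import numFieldTopology.Exports numFieldNormedType.Exports.
Import measurable_realfun.
Local Open Scope classical_set_scope.
Local Open Scope ring_scope.

Local Notation Re := complex.Re.
Local Notation Im := complex.Im.

Section BoundedMeasurable.
Variable R : realType.
Context {dT : measure_display} {T : measurableType dT}.

Definition bounded_measurable (f : T -> R) :=
  measurable_fun setT f /\ exists c : R, forall w, `|f w| <= c.

Lemma bounded_measurable_cst (a : R) : bounded_measurable (fun _ => a).
Proof. by split; [exact: measurable_cst | exists `|a|]. Qed.

Lemma bounded_measurableD f g : bounded_measurable f -> bounded_measurable g ->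
  bounded_measurable (fun w => f w + g w).
Proof.
move=> [mf [a ha]] [mg [b hb]]; split; first exact: measurable_funD.
by exists (a + b) => w; apply: le_trans (ler_normD _ _) _; exact: lerD.
Qed.

Lemma bounded_measurableN f : bounded_measurable f ->
  bounded_measurable (fun w => - f w).
Proof.
move=> [mf [a ha]]; split; first exact: measurableT_comp.
by exists a => w; rewrite normrN.
Qed.

Lemma bounded_measurableB f g : bounded_measurable f -> bounded_measurable g ->
  bounded_measurable (fun w => f w - g w).
Proof. by move=> hf hg; apply: bounded_measurableD => //; exact: bounded_measurableN. Qed.

Lemma bounded_measurableM f g : bounded_measurable f -> bounded_measurable g ->
  bounded_measurable (fun w => f w * g w).
Proof.
move=> [mf [a ha]] [mg [b hb]]; split; first exact: measurable_funM.
by exists (a * b) => w; rewrite normrM; exact: ler_pM.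
Qed.

Lemma bounded_measurable_sum (I : Type) (s : seq I) (F : I -> T -> R) :
  (forall i, bounded_measurable (F i)) ->
  bounded_measurable (fun w => \sum_(i <- s) F i w).
Proof.
move=> hF; elim: s => [|x s IH].
  by under eq_fun do rewrite big_nil; exact: bounded_measurable_cst.
by under eq_fun do rewrite big_cons; exact: bounded_measurableD.
Qed.

Lemma bounded_measurable_prod (I : Type) (s : seq I) (F : I -> T -> R) :
  (forall i, bounded_measurable (F i)) ->
  bounded_measurable (fun w => \prod_(i <- s) F i w).
Proof.
move=> hF; elim: s => [|x s IH].
  by under eq_fun do rewrite big_nil; exact: bounded_measurable_cst.
by under eq_fun do rewrite big_cons; exact: bounded_measurableM.
Qed.

Lemma bounded_measurable_indic (A : set T) : measurable A ->
  bounded_measurable (\1_A : T -> R).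
Proof.
move=> mA; split; first exact: measurable_indic.
by exists 1 => w; rewrite indicE; case: (w \in A); rewrite ?normr1 ?normr0.
Qed.

Lemma mem_preimage_true (b : T -> bool) w : (w \in b @^-1` [set true]) = b w.
Proof.
case: (boolP (b w)) => h; first by rewrite mem_set.
by rewrite memNset //= => /eqP; rewrite (negbTE h).
Qed.

Lemma bounded_measurable_bool (b : T -> bool) : measurable (b @^-1` [set true]) ->
  bounded_measurable (fun w => (b w)%:R : R).
Proof.
move=> mb; have := bounded_measurable_indic mb; congr bounded_measurable.
by apply: funext => w; rewrite indicE mem_preimage_true.
Qed.

Lemma measurable_fun_dist f (a : R) : bounded_measurable f ->
  measurable_fun setT (fun w => `|f w - a|).
Proof. by move=> [mf _]; apply: measurableT_comp => //; exact: measurable_funB. Qed.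

Lemma measurable_dist_ge f (a eps : R) : bounded_measurable f ->
  measurable [set w | eps <= `|f w - a|].
Proof.
move=> hf; rewrite -[X in measurable X]setTI.
have -> : [set w | eps <= `|f w - a|] = (fun w => `|f w - a|) @^-1` `[eps, +oo[.
  by apply/seteqP; split => w /=; rewrite in_itv /= andbT.
exact: measurable_fun_dist.
Qed.

Lemma measurable_dist_gt f (a eps : R) : bounded_measurable f ->
  measurable [set w | eps < `|f w - a|].
Proof.
move=> hf; rewrite -[X in measurable X]setTI.
have -> : [set w | eps < `|f w - a|] = (fun w => `|f w - a|) @^-1` `]eps, +oo[.
  by apply/seteqP; split => w /=; rewrite in_itv /= andbT.
exact: measurable_fun_dist.
Qed.

End BoundedMeasurable.

Section Expectation.
Variable R : realType.
Context {dT : measure_display} {T : measurableType dT} (P : probability T R).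

Lemma bounded_measurable_integrable f : bounded_measurable f ->
  P.-integrable setT (EFin \o f).
Proof.
move=> [mf [c hc]]; apply: measurable_bounded_integrable => //.
  exact: (le_lt_trans (probability_le1 P measurableT) (ltry _)).
exists c; split; first exact: num_real.
by move=> x xc y _ /=; apply: le_trans (hc y) _; exact: ltW.
Qed.

Local Notation E f := (Rintegral P setT f).

Lemma Rintegral_cst_probability (c : R) : E (fun _ => c) = c.
Proof. by rewrite Rintegral_cst //; have /= -> := probability_setT P; rewrite mulr1. Qed.

Lemma RintegralD_bounded f g : bounded_measurable f -> bounded_measurable g ->
  E (fun w => f w + g w) = E f + E g.
Proof. by move=> hf hg; apply: RintegralD => //; exact: bounded_measurable_integrable. Qed.

Lemma RintegralB_bounded f g : bounded_measurable f -> bounded_measurable g ->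
  E (fun w => f w - g w) = E f - E g.
Proof. by move=> hf hg; apply: RintegralB => //; exact: bounded_measurable_integrable. Qed.

Lemma RintegralZl_bounded (c : R) f : bounded_measurable f ->
  E (fun w => c * f w) = c * E f.
Proof. by move=> hf; apply: RintegralZl => //; exact: bounded_measurable_integrable. Qed.

Lemma Rintegral_sum_bounded (I : Type) (s : seq I) (F : I -> T -> R) :
  (forall i, bounded_measurable (F i)) ->
  E (fun w => \sum_(i <- s) F i w) = \sum_(i <- s) E (F i).
Proof.
move=> hF; elim: s => [|x s IH].
  by under eq_fun do rewrite big_nil; rewrite Rintegral_cst_probability big_nil.
under eq_fun do rewrite big_cons.
by rewrite big_cons RintegralD_bounded ?IH //; exact: bounded_measurable_sum.
Qed.

Lemma Rintegral_indic_probability (A : set T) : measurable A -> E (\1_A) = fine (P A).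
Proof. by move=> mA; rewrite /Rintegral integral_indic // setIT. Qed.

Lemma probability_fin_num (A : set T) : measurable A -> P A \is a fin_num.
Proof.
move=> mA; rewrite ge0_fin_numE ?measure_ge0 //.
exact: (le_lt_trans (probability_le1 P mA) (ltry _)).
Qed.

Lemma chebyshev_tail f (a v eps : R) : bounded_measurable f -> 0 < eps ->
  E (fun w => (f w - a) ^+ 2) <= v ->
  (P [set w | (eps <= `|f w - a|)%R] <= (v / eps ^+ 2)%:E)%E.
Proof.
move=> hf eps0 hv; have mB := measurable_dist_ge a eps hf.
rewrite -(fineK (probability_fin_num mB)) lee_fin ler_pdivlMr ?exprn_gt0 // mulrC.
apply: le_trans hv.
rewrite -Rintegral_indic_probability // -RintegralZl_bounded; last exact: bounded_measurable_indic.
apply: le_Rintegral => //.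
- apply: bounded_measurable_integrable.
  by apply: bounded_measurableM; [exact: bounded_measurable_cst | exact: bounded_measurable_indic].
- apply: bounded_measurable_integrable; rewrite /=; under eq_fun do rewrite expr2.
  by apply: bounded_measurableM; apply: bounded_measurableB => //; exact: bounded_measurable_cst.
move=> w _; rewrite indicE; case: (boolP (w \in _)) => [/set_mem /= hw|_].
  rewrite mulr1 -[(f w - a) ^+ 2]real_normK ?num_real // !expr2.
  by apply: ler_pM => //; exact: ltW.
by rewrite mulr0 sqr_ge0.
Qed.

Lemma chebyshev_concentration f (a v eps : R) : bounded_measurable f -> 0 < eps ->
  E (fun w => (f w - a) ^+ 2) <= v ->
  ((1 - v / eps ^+ 2)%:E <= P [set w | (`|f w - a| <= eps)%R])%E.
Proof.
move=> hf eps0 hv.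
have -> : [set w | `|f w - a| <= eps] = ~` [set w | eps < `|f w - a|].
  by apply/seteqP; split => w /=; rewrite leNgt => /negP.
rewrite probability_setC; last exact: measurable_dist_gt.
rewrite EFinB leeB //.
apply: le_trans (chebyshev_tail hf eps0 hv).
apply: le_measure; rewrite ?inE; last by move=> w /ltW.
  exact: measurable_dist_gt.
exact: measurable_dist_ge.
Qed.

Lemma mutually_independent_pair (I : finType) (G : I -> set (set T)) :
  mutually_independent P G -> (forall k, G k setT) ->
  forall i j A B, i != j -> G i A -> G j B -> P (A `&` B) = (P A * P B)%E.
Proof.
move=> hind hT i j A B ij hA hB.
pose AB k := if k == i then A else if k == j then B else setT.
have hAB k : G k (AB k) by rewrite /AB; case: eqP => [->|_]; [|case: eqP => [->|]].
have -> : A `&` B = \bigcap_(k in [set: I]) AB k.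
  apply/seteqP; split => [w [wA wB] k _|w wAB].
    by rewrite /AB; case: ifP => _; [|case: ifP].
  by split; [have := wAB i Logic.I | have := wAB j Logic.I];
    rewrite /AB ?eqxx // eq_sym (negbTE ij).
rewrite hind // (bigD1 i) //= (bigD1 j) 1?eq_sym //= big1 ?mule1.
  by rewrite /AB eqxx eq_sym (negbTE ij) eqxx.
by move=> k /andP[ki kj]; rewrite /AB (negbTE ki) (negbTE kj) probability_setT.
Qed.

Lemma Rintegral_sqr_sum (I : finType) (Z : I -> T -> R) :
  (forall i, bounded_measurable (Z i)) ->
  E (fun w => (\sum_i Z i w) ^+ 2) = \sum_i \sum_j E (fun w => Z i w * Z j w).
Proof.
move=> hZ; under eq_fun do rewrite expr2 big_distrlr /=.
rewrite Rintegral_sum_bounded => [|i]; last first.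
  by apply: bounded_measurable_sum => j; exact: bounded_measurableM.
apply: eq_bigr => i _; rewrite Rintegral_sum_bounded // => j.
exact: bounded_measurableM.
Qed.

Lemma Rintegral_centered_product f g (c : R) :
  bounded_measurable f -> bounded_measurable g ->
  E (fun w => (f w - c) * (g w - c)) = E (fun w => f w * g w) - c * E f - c * E g + c ^+ 2.
Proof.
move=> hf hg; have hc := bounded_measurable_cst (T := T) c.
have hfg := bounded_measurableM hf hg.
have hcf := bounded_measurableM hc hf; have hcg := bounded_measurableM hc hg.
have expand w : (f w - c) * (g w - c) = f w * g w - c * f w - c * g w + c ^+ 2 by ring.
under eq_fun do rewrite expand.
rewrite RintegralD_bounded ?Rintegral_cst_probability; last 2 first.
- exact: bounded_measurableB (bounded_measurableB hfg hcf) hcg.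
- exact: bounded_measurable_cst.
by rewrite !RintegralB_bounded ?RintegralZl_bounded //; exact: bounded_measurableB.
Qed.

End Expectation.

Section BernoulliWeight.
Variables (R : comRingType) (N : nat).

Definition bernoulli_weight (x : {ffun 'I_N -> bool}) (g : 'I_N -> R) : R :=
  \prod_(s < N) (if x s then g s else 1 - g s).

Lemma bernoulli_weight_moment (S : {set 'I_N}) (g : 'I_N -> R) :
  \sum_(x : {ffun 'I_N -> bool}) (\prod_(s in S) (x s)%:R) * bernoulli_weight x g =
  \prod_(s in S) g s.
Proof.
pose F s (b : bool) : R := (if s \in S then b%:R else 1) * (if b then g s else 1 - g s).
have sumF s : \sum_(b : bool) F s b = if s \in S then g s else 1.
  by rewrite big_bool /F; case: (s \in S); rewrite /= ?mul1r ?mul0r ?addr0 // subrKC.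
rewrite [RHS]big_mkcond -(eq_bigr _ (fun s _ => sumF s)) bigA_distr_bigA /=.
apply: eq_bigr => x _; rewrite /bernoulli_weight big_split /= -big_mkcond.
by congr (_ * _); apply: eq_bigr => s _; case: (s \in S).
Qed.

End BernoulliWeight.

Section ConditionalBernoulli.
Variable R : realType.
Context {dT : measure_display} {T : measurableType dT} (P : probability T R).
Variables (N : nat) (X : 'I_N -> T -> bool) (f : T -> R) (Gs : set (set T)).
Hypotheses (hXm : forall s, measurable (X s @^-1` [set true]))
  (hX : cond_iid_bernoulli P Gs f X) (hGs : Gs setT) (hf : bounded_measurable f).

Local Notation E g := (Rintegral P setT g).

Definition outcome (x : {ffun 'I_N -> bool}) := [set w | forall s, X s w = x s].

Lemma measurable_outcome x : measurable (outcome x).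
Proof.
have -> : outcome x = \bigcap_(s in [set: 'I_N]) [set w | X s w = x s].
  by apply/seteqP; split => [w wx s _ | w wx s]; exact: wx.
apply: fin_bigcap_measurable; first exact: finite_finset.
move=> s _; case: (x s); first exact: hXm.
have -> : [set w | X s w = false] = ~` (X s @^-1` [set true]).
  by apply/seteqP; split => w /=; case: (X s w).
exact: measurableC.
Qed.

Lemma bernoulli_weight_outcome x w :
  bernoulli_weight x (fun s => (X s w)%:R) = \1_(outcome x) w :> R.
Proof.
rewrite indicE /bernoulli_weight; case: (boolP [forall s, X s w == x s]) => /forallP H.
  rewrite mem_set => [|s]; last exact/eqP.
  by apply: big1 => s _; rewrite (eqP (H s)); case: (x s); rewrite ?subr0.
have [s /negbTE Hs] : exists s, X s w != x s by apply/existsP; rewrite -negb_forall; exact/forallP.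
rewrite memNset => [|/(_ s)/eqP]; last by rewrite Hs.
by rewrite (bigD1 s) //=; move: Hs; case: (x s); case: (X s w) => //= _; rewrite ?subrr mul0r.
Qed.

Lemma bounded_measurable_weight x (g : 'I_N -> T -> R) :
  (forall s, bounded_measurable (g s)) ->
  bounded_measurable (fun w => bernoulli_weight x (fun s => g s w)).
Proof.
move=> hg; apply: bounded_measurable_prod => s; case: (x s) => //.
by apply: bounded_measurableB => //; exact: bounded_measurable_cst.
Qed.

Lemma Rintegral_bernoulli_weight x :
  E (fun w => bernoulli_weight x (fun s => (X s w)%:R)) =
  E (fun w => bernoulli_weight x (fun _ => f w)).
Proof.
under eq_Rintegral do rewrite bernoulli_weight_outcome.
rewrite /Rintegral integral_indic //; last exact: measurable_outcome.
rewrite setIT -[outcome x]setTI; exact: (congr1 fine (hX hGs x)).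
Qed.

Lemma Rintegral_prod_bernoulli_expand (S : {set 'I_N}) (g : 'I_N -> T -> R) :
  (forall s, bounded_measurable (g s)) ->
  E (fun w => \prod_(s in S) g s w) =
  \sum_(x : {ffun 'I_N -> bool}) (\prod_(s in S) (x s)%:R) *
    E (fun w => bernoulli_weight x (fun s => g s w)).
Proof.
move=> hg; under eq_Rintegral do rewrite -bernoulli_weight_moment.
rewrite Rintegral_sum_bounded => [|x]; last first.
  apply: bounded_measurableM; first exact: bounded_measurable_cst.
  exact: bounded_measurable_weight.
by apply: eq_bigr => x _; rewrite RintegralZl_bounded //; exact: bounded_measurable_weight.
Qed.

Lemma cond_bernoulli_moment (S : {set 'I_N}) :
  E (fun w => \prod_(s in S) (X s w)%:R) = E (fun w => f w ^+ #|S|).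
Proof.
under [RHS]eq_Rintegral do rewrite -prodr_const.
rewrite !Rintegral_prod_bernoulli_expand // => [|s]; last exact: bounded_measurable_bool.
by apply: eq_bigr => x _; rewrite Rintegral_bernoulli_weight.
Qed.

Lemma cond_bernoulli_mean s : E (fun w => (X s w)%:R) = E f.
Proof.
have := cond_bernoulli_moment [set s]; rewrite cards1.
by under eq_Rintegral do rewrite big_set1.
Qed.

Lemma cond_bernoulli_pair s t : s != t ->
  E (fun w => (X s w)%:R * (X t w)%:R) = E (fun w => f w ^+ 2).
Proof.
move=> st; have := cond_bernoulli_moment [set s; t]; rewrite cards2 st.
by under eq_Rintegral do rewrite big_setU1 ?big_set1 ?inE //.
Qed.

End ConditionalBernoulli.

Section ComplexParts.
Variable R : rcfType.

Lemma ReM (x y : R[i]) : Re (x * y) = Re x * Re y - Im x * Im y.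
Proof. by case: x => a b; case: y => c e. Qed.

Lemma ImM (x y : R[i]) : Im (x * y) = Re x * Im y + Im x * Re y.
Proof. by case: x => a b; case: y => c e. Qed.

Lemma ReJ (x : R[i]) : Re (conjc x) = Re x.
Proof. by case: x => a b. Qed.

Lemma ImJ (x : R[i]) : Im (conjc x) = - Im x.
Proof. by case: x => a b. Qed.

Lemma Re_mulcJ (x : R[i]) : Re (x * conjc x) = Re x ^+ 2 + Im x ^+ 2.
Proof. by case: x => a b /=; rewrite mulrN opprK. Qed.

Lemma Im_mulcJ (x : R[i]) : Im (x * conjc x) = 0.
Proof. by case: x => a b /=; rewrite mulrN mulrC addNr. Qed.

End ComplexParts.

Section ComplexBounded.
Variable R : realType.
Context {dT : measure_display} {T : measurableType dT}.

Definition cbounded_measurable (g : T -> R[i]) :=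
  bounded_measurable (fun w => Re (g w)) /\ bounded_measurable (fun w => Im (g w)).

Lemma cbounded_measurable_cst (a : R[i]) : cbounded_measurable (fun _ => a).
Proof. by split; exact: bounded_measurable_cst. Qed.

Lemma cbounded_measurableD f g : cbounded_measurable f -> cbounded_measurable g ->
  cbounded_measurable (fun w => f w + g w).
Proof.
move=> [f1 f2] [g1 g2].
by split; under eq_fun do rewrite raddfD /=; exact: bounded_measurableD.
Qed.

Lemma cbounded_measurableM f g : cbounded_measurable f -> cbounded_measurable g ->
  cbounded_measurable (fun w => f w * g w).
Proof.
move=> [f1 f2] [g1 g2]; split.
  by under eq_fun do rewrite ReM; apply: bounded_measurableB; exact: bounded_measurableM.
by under eq_fun do rewrite ImM; apply: bounded_measurableD; exact: bounded_measurableM.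
Qed.

Lemma cbounded_measurableJ f : cbounded_measurable f ->
  cbounded_measurable (fun w => conjc (f w)).
Proof.
move=> [f1 f2]; split; first by under eq_fun do rewrite ReJ.
by under eq_fun do rewrite ImJ; exact: bounded_measurableN.
Qed.

Lemma cbounded_measurable_sum (I : Type) (s : seq I) (F : I -> T -> R[i]) :
  (forall i, cbounded_measurable (F i)) ->
  cbounded_measurable (fun w => \sum_(i <- s) F i w).
Proof.
move=> hF; elim: s => [|x s IH].
  by under eq_fun do rewrite big_nil; exact: cbounded_measurable_cst.
by under eq_fun do rewrite big_cons; exact: cbounded_measurableD.
Qed.

End ComplexBounded.

Section SameMean.
Variable R : realType.
Context {dT : measure_display} {T : measurableType dT} (P : probability T R).
Context {dT' : measure_display} {T' : measurableType dT'} (Q : probability T' R).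

Definition same_mean (g : T -> R[i]) (h : T' -> R[i]) :=
  [/\ cbounded_measurable g, cbounded_measurable h,
   Rintegral P setT (fun w => Re (g w)) = Rintegral Q setT (fun y => Re (h y)) &
   Rintegral P setT (fun w => Im (g w)) = Rintegral Q setT (fun y => Im (h y))].

Lemma same_mean_cst a : same_mean (fun _ => a) (fun _ => a).
Proof. by split; rewrite ?Rintegral_cst_probability //; exact: cbounded_measurable_cst. Qed.

Lemma same_meanD g h g' h' : same_mean g h -> same_mean g' h' ->
  same_mean (fun w => g w + g' w) (fun y => h y + h' y).
Proof.
move=> [[g1 g2] [h1 h2] eRe eIm] [[g1' g2'] [h1' h2'] eRe' eIm'].
split; try exact: cbounded_measurableD; try by split.
  under eq_Rintegral do rewrite raddfD /=; under [RHS]eq_Rintegral do rewrite raddfD /=.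
  by rewrite !RintegralD_bounded // eRe eRe'.
under eq_Rintegral do rewrite raddfD /=; under [RHS]eq_Rintegral do rewrite raddfD /=.
by rewrite !RintegralD_bounded // eIm eIm'.
Qed.

Lemma same_meanZl c g h : same_mean g h -> same_mean (fun w => c * g w) (fun y => c * h y).
Proof.
move=> [[g1 g2] [h1 h2] eRe eIm].
split; try (apply: cbounded_measurableM => //; exact: cbounded_measurable_cst).
  under eq_Rintegral do rewrite ReM; under [RHS]eq_Rintegral do rewrite ReM.
  rewrite !RintegralB_bounded;
    try (apply: bounded_measurableM => //; exact: bounded_measurable_cst).
  by rewrite !RintegralZl_bounded // eRe eIm.
under eq_Rintegral do rewrite ImM; under [RHS]eq_Rintegral do rewrite ImM.
rewrite !RintegralD_bounded;
  try (apply: bounded_measurableM => //; exact: bounded_measurable_cst).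
by rewrite !RintegralZl_bounded // eRe eIm.
Qed.

Lemma same_mean_sum (I : Type) (s : seq I) (g : I -> T -> R[i]) (h : I -> T' -> R[i]) :
  (forall i, same_mean (g i) (h i)) ->
  same_mean (fun w => \sum_(i <- s) g i w) (fun y => \sum_(i <- s) h i y).
Proof.
move=> hgh; elim: s => [|x s IH].
  by under eq_fun do rewrite big_nil; under [X in same_mean _ X]eq_fun do rewrite big_nil;
    exact: same_mean_cst.
under eq_fun do rewrite big_cons; under [X in same_mean _ X]eq_fun do rewrite big_cons.
exact: same_meanD.
Qed.

End SameMean.

Section Kraus.
Variables (R : realType) (d : nat).
Local Notation C := R[i].

Lemma mxdagM m n p (A : 'M[C]_(m, n)) (B : 'M[C]_(n, p)) :
  mxdag (A *m B) = mxdag B *m mxdag A.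
Proof. by rewrite /mxdag map_mxM trmx_mul. Qed.

Lemma mxdagE m n (A : 'M[C]_(m, n)) i j : mxdag A i j = conjc (A j i).
Proof. by rewrite !mxE. Qed.

Lemma mxtrace_dag (A : 'M[C]_d) : \tr (mxdag A) = conjc (\tr A).
Proof. by rewrite /mxtrace rmorph_sum; apply: eq_bigr => i _; rewrite mxdagE. Qed.

Definition ketbra (psi : 'cV[C]_d) : 'M[C]_d := psi *m mxdag psi.

Lemma ketbraE psi a b : ketbra psi a b = psi a 0 * conjc (psi b 0).
Proof. by rewrite /ketbra mxE big_ord1 !mxE. Qed.

Lemma mxdag_ketbra psi : mxdag (ketbra psi) = ketbra psi.
Proof. by apply/matrixP => a b; rewrite mxdagE !ketbraE rmorphM /= conjcK mulrC. Qed.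

Lemma ketbra_mul (U : 'M[C]_d) psi : U *m ketbra psi *m mxdag U = ketbra (U *m psi).
Proof. by rewrite /ketbra mxdagM !mulmxA. Qed.

Lemma quad_form_trace (B : 'M[C]_d) psi :
  (mxdag psi *m B *m psi) 0 0 = \tr (ketbra psi *m B).
Proof. by rewrite -trace_mx11 mxtrace_mulC /ketbra !mulmxA. Qed.

Variables (K : nat) (A : 'I_K -> 'M[C]_d).

(* For r = |psi><psi| this is sum_k |<psi|A_k|psi>|^2. *)
Definition kraus_quad (r : 'M[C]_d) : C :=
  \sum_(k < K) \tr (r *m A k) * \tr (r *m mxdag (A k)).

Lemma fE_kraus (E : 'M[C]_d -> 'M[C]_d) :
  (forall r, E r = \sum_(k < K) (A k *m r *m mxdag (A k))) ->
  forall psi, fE E psi = Re (kraus_quad (ketbra psi)).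
Proof.
move=> hK psi; rewrite /fE hK mulmx_sumr mulmx_suml summxE /kraus_quad.
congr Re; apply: eq_bigr => k _.
have -> : mxdag psi *m (A k *m (psi *m mxdag psi) *m mxdag (A k)) *m psi =
    (mxdag psi *m A k *m psi) *m (mxdag psi *m mxdag (A k) *m psi) by rewrite !mulmxA.
by rewrite mxE big_ord1 !quad_form_trace.
Qed.

Lemma kraus_quad_real psi : Im (kraus_quad (ketbra psi)) = 0.
Proof.
rewrite raddf_sum; apply: big1 => k _ /=.
rewrite -[X in _ * \tr (X *m _)]mxdag_ketbra -mxdagM mxtrace_dag mxtrace_mulC.
exact: Im_mulcJ.
Qed.

Lemma fE_kraus_sqr (E : 'M[C]_d -> 'M[C]_d) :
  (forall r, E r = \sum_(k < K) (A k *m r *m mxdag (A k))) ->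
  forall psi, fE E psi ^+ 2 = Re (kraus_quad (ketbra psi) ^+ 2).
Proof. by move=> hK psi; rewrite (fE_kraus hK) !expr2 ReM kraus_quad_real mulr0 subr0. Qed.

Lemma kraus_quad_expand r : kraus_quad r =
  \sum_(k < K) \sum_(p < d) \sum_(q < d) \sum_(p' < d) \sum_(q' < d)
    (A k p q * conjc (A k q' p')) * (r q p * r q' p').
Proof.
have trE (B : 'M[C]_d) : \tr (r *m B) = \sum_(p < d) \sum_(q < d) B p q * r q p.
  by rewrite mxtrace_mulC /mxtrace; apply: eq_bigr => p _; rewrite mxE.
apply: eq_bigr => k _; rewrite !trE.
do 2 (rewrite big_distrl; apply: eq_bigr => ? _).
do 2 (rewrite big_distrr; apply: eq_bigr => ? _).
by rewrite mxdagE mulrACA.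
Qed.

Lemma kraus_quad_sqr_expand r : kraus_quad r ^+ 2 =
  \sum_(k < K) \sum_(p < d) \sum_(q < d) \sum_(p' < d) \sum_(q' < d)
  \sum_(k2 < K) \sum_(p2 < d) \sum_(q2 < d) \sum_(p2' < d) \sum_(q2' < d)
    ((A k p q * conjc (A k q' p')) * (A k2 p2 q2 * conjc (A k2 q2' p2'))) *
    ((r q p * r q' p') * (r q2 p2 * r q2' p2')).
Proof.
rewrite expr2 {1}kraus_quad_expand.
do 5 (rewrite big_distrl; apply: eq_bigr => ? _).
rewrite kraus_quad_expand.
do 5 (rewrite big_distrr; apply: eq_bigr => ? _).
exact: mulrACA.
Qed.

End Kraus.

Lemma ntensmx_mul (R : comPzRingType) m n p (A : 'M[R]_(m, n)) (B : 'M[R]_(n, p)) k :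
  A ^t k *m B ^t k = (A *m B) ^t k.
Proof.
case: k => [|k]; first by rewrite !ntensmx0 mul1mx.
elim: k => [|k IH]; first by rewrite !ntensmx1.
by rewrite !ntensmxSS tensmx_mul IH.
Qed.

Section UnitaryEntries.
Variable R : realType.
Local Notation C := R[i].
Context {dT : measure_display} {T : measurableType dT}.

Lemma open_entry_set m n (p : 'I_m) (j : 'I_n) (O : set R) :
  open O -> open [set M : 'M[R]_(m, n) | O (M p j)].
Proof.
move=> oO; rewrite openE => M /= OM.
exists (fun i k => if (i == p) && (k == j) then O else setT).
  move=> i k; case: ifP => [/andP[/eqP -> /eqP ->]|_]; last exact: filterT.
  by move: oO; rewrite openE; apply.
by move=> N /= HN; have := HN p j; rewrite !eqxx.
Qed.

Lemma measurable_entry m n (Y : T -> 'M[C]_(m, n)) : rmeas Y -> forall p q,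
  measurable_fun setT (fun w => Re (Y w p q)) /\
  measurable_fun setT (fun w => Im (Y w p q)).
Proof.
move=> hY p q.
have mremb (j : 'I_(n + n)) : measurable_fun setT (fun w => remb (Y w) p j).
  apply: (measurability _ (RGenOpens.measurableE R)).
  move=> _ [_ [x [y ->]] <-]; rewrite setTI.
  apply: (hY [set M : 'M[R]_(m, n + n) | `]x, y[%classic (M p j)]).
  by apply: sub_sigma_algebra; apply: open_entry_set; exact: interval_open.
split; [have := mremb (lshift n q) | have := mremb (rshift n q)];
  by apply: eq_measurable_fun => w _; rewrite /remb ?row_mxEl ?row_mxEr mxE.
Qed.

Lemma unitary_entry_bound d (U : 'M[C]_d) : U \is unitarymx -> forall p q,
  `|Re (U p q)| <= 1 /\ `|Im (U p q)| <= 1.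
Proof.
move=> /unitarymxP hU p q.
have := congr1 (fun M : 'M[C]_d => Re (M p p)) hU.
rewrite /= !mxE eqxx /= raddf_sum /=.
under eq_bigr do rewrite !mxE /= Re_mulcJ.
rewrite (bigD1 q) //= => hrow.
have rest_ge0 : 0 <= \sum_(i < d | i != q) (Re (U p i) ^+ 2 + Im (U p i) ^+ 2).
  by apply: sumr_ge0 => i _; rewrite addr_ge0 // sqr_ge0.
set a := Re (U p q) in hrow *; set b := Im (U p q) in hrow *.
have ha : a ^+ 2 <= 1 by rewrite -hrow; have := sqr_ge0 b; lra.
have hb : b ^+ 2 <= 1 by rewrite -hrow; have := sqr_ge0 a; lra.
by split; rewrite ler_norml; apply/andP; split; nra.
Qed.

Variable d : nat.
Variables (Y : T -> 'M[C]_d) (z : 'cV[C]_d).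
Hypotheses (hYU : forall w, Y w \is unitarymx) (hYm : rmeas Y).

Lemma cbounded_unitary_entry p q : cbounded_measurable (fun w => Y w p q).
Proof.
have [mRe mIm] := measurable_entry hYm p q.
by split; split => //; exists 1 => w; have [] := unitary_entry_bound (hYU w) p q.
Qed.

Lemma cbounded_ketbra a b : cbounded_measurable (fun w => ketbra (Y w *m z) a b).
Proof.
have hpsi c : cbounded_measurable (fun w => (Y w *m z) c 0).
  under eq_fun do rewrite mxE.
  apply: cbounded_measurable_sum => j; apply: cbounded_measurableM.
    exact: cbounded_unitary_entry.
  exact: cbounded_measurable_cst.
under eq_fun do rewrite ketbraE.
by apply: cbounded_measurableM => //; exact: cbounded_measurableJ.
Qed.

Lemma bounded_measurable_fE (E : 'M[C]_d -> 'M[C]_d) : is_channel E ->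
  bounded_measurable (fun w => fE E (Y w *m z)).
Proof.
move=> [K [A [hK _]]]; under eq_fun do rewrite (fE_kraus hK) kraus_quad_expand.
apply: (cbounded_measurable_sum _ _).1 => k.
do 4 apply: cbounded_measurable_sum => ?.
apply: cbounded_measurableM; first exact: cbounded_measurable_cst.
by apply: cbounded_measurableM; exact: cbounded_ketbra.
Qed.

End UnitaryEntries.

Section Design.
Variables (R : realType) (d : nat) (z : 'cV[R[i]]_d).
Context {dT : measure_display} {T : measurableType dT} (P : probability T R).
Context {dT' : measure_display} {T' : measurableType dT'} (Q : probability T' R).
Variables (V : T -> 'M[R[i]]_d) (W : T' -> 'M[R[i]]_d).
Hypotheses (hVU : forall w, V w \is unitarymx) (hVm : rmeas V).
Hypotheses (hWU : forall y, W y \is unitarymx) (hWm : rmeas W).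
Hypothesis hD : unitary_design 4 P Q V W.

Lemma same_mean_design k (a b : 'I_(d ^ k)) (g : 'M[R[i]]_d -> R[i]) : (k <= 4)%N ->
  (forall U, ((ketbra (U *m z)) ^t k) a b = g U) ->
  cbounded_measurable (fun w => g (V w)) -> cbounded_measurable (fun y => g (W y)) ->
  same_mean P Q (fun w => g (V w)) (fun y => g (W y)).
Proof.
move=> k4 hg hgV hgW; have [eRe eIm] := hD k4 ((ketbra z) ^t k) a b.
have conj_tens U : (U ^t k *m (ketbra z) ^t k *m (mxdag U) ^t k) a b = g U.
  by rewrite !ntensmx_mul ketbra_mul hg.
split => //; rewrite /Rintegral; [move: eRe | move: eIm];
  under eq_fun do rewrite conj_tens; under [in X in _ = X -> _]eq_fun do rewrite conj_tens;
  by move=> ->.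
Qed.

Local Notation rhoV w := (ketbra (V w *m z)).
Local Notation rhoW y := (ketbra (W y *m z)).

Lemma same_mean_ketbra2 a b a' b' :
  same_mean P Q (fun w => rhoV w a b * rhoV w a' b') (fun y => rhoW y a b * rhoW y a' b').
Proof.
apply: (@same_mean_design 2 (mxtens_index (a, a')) (mxtens_index (b, b'))
  (fun U => ketbra (U *m z) a b * ketbra (U *m z) a' b')) => //.
- by move=> U; rewrite ntensmx2 tensmxE.
- by apply: cbounded_measurableM; exact: cbounded_ketbra.
- by apply: cbounded_measurableM; exact: cbounded_ketbra.
Qed.

Lemma same_mean_ketbra4 a1 b1 a2 b2 a3 b3 a4 b4 :
  same_mean P Q
    (fun w => (rhoV w a1 b1 * rhoV w a2 b2) * (rhoV w a3 b3 * rhoV w a4 b4))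
    (fun y => (rhoW y a1 b1 * rhoW y a2 b2) * (rhoW y a3 b3 * rhoW y a4 b4)).
Proof.
apply: (@same_mean_design 4
  (mxtens_index (a1, mxtens_index (a2, mxtens_index (a3, a4))))
  (mxtens_index (b1, mxtens_index (b2, mxtens_index (b3, b4))))
  (fun U => (ketbra (U *m z) a1 b1 * ketbra (U *m z) a2 b2) *
            (ketbra (U *m z) a3 b3 * ketbra (U *m z) a4 b4))) => //.
- by move=> U; rewrite !ntensmxSS ntensmx1 !tensmxE !mulrA.
- by do 2 apply: cbounded_measurableM; exact: cbounded_ketbra.
- by do 2 apply: cbounded_measurableM; exact: cbounded_ketbra.
Qed.

Variables (K : nat) (A : 'I_K -> 'M[R[i]]_d).

Lemma same_mean_kraus_quad :
  same_mean P Q (fun w => kraus_quad A (rhoV w)) (fun y => kraus_quad A (rhoW y)).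
Proof.
under eq_fun do rewrite kraus_quad_expand.
under [X in same_mean _ _ _ X]eq_fun do rewrite kraus_quad_expand.
do 5 apply: same_mean_sum => ?.
by apply: same_meanZl; exact: same_mean_ketbra2.
Qed.

Lemma same_mean_kraus_quad_sqr :
  same_mean P Q (fun w => kraus_quad A (rhoV w) ^+ 2) (fun y => kraus_quad A (rhoW y) ^+ 2).
Proof.
under eq_fun do rewrite kraus_quad_sqr_expand.
under [X in same_mean _ _ _ X]eq_fun do rewrite kraus_quad_sqr_expand.
do 10 apply: same_mean_sum => ?.
by apply: same_meanZl; exact: same_mean_ketbra4.
Qed.

Lemma design_fE_mean (E : 'M[R[i]]_d -> 'M[R[i]]_d) :
  (forall r, E r = \sum_(k < K) (A k *m r *m mxdag (A k))) ->
  Rintegral P setT (fun w => fE E (V w *m z)) = Rintegral Q setT (fun y => fE E (W y *m z)).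
Proof.
move=> hK; under eq_Rintegral do rewrite (fE_kraus hK).
by under [RHS]eq_Rintegral do rewrite (fE_kraus hK); have [] := same_mean_kraus_quad.
Qed.

Lemma design_fE_sqr_mean (E : 'M[R[i]]_d -> 'M[R[i]]_d) :
  (forall r, E r = \sum_(k < K) (A k *m r *m mxdag (A k))) ->
  Rintegral P setT (fun w => fE E (V w *m z) ^+ 2) =
  Rintegral Q setT (fun y => fE E (W y *m z) ^+ 2).
Proof.
move=> hK; under eq_Rintegral do rewrite (fE_kraus_sqr hK).
by under [RHS]eq_Rintegral do rewrite (fE_kraus_sqr hK); have [] := same_mean_kraus_quad_sqr.
Qed.

End Design.

Lemma sigmaY_setT (R : realType) {dT : measure_display} {T : measurableType dT} m n
  (Y : T -> 'M[R[i]]_(m, n)) : sigmaY Y setT.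
Proof. by exists setT; [apply: sub_sigma_algebra; exact: openT | rewrite preimage_setT]. Qed.

Section SampleMean.
Variable R : realType.
Context {dT : measure_display} {T : measurableType dT} (P : probability T R).
Variables (M N : nat) (X : 'I_M -> 'I_N -> T -> bool) (f : 'I_M -> T -> R).
Variables (G Gs : 'I_M -> set (set T)) (F Q2 : R).
Hypotheses (hXm : forall i s, measurable (X i s @^-1` [set true]))
  (hind : mutually_independent P G) (hGT : forall i, G i setT)
  (hGX : forall i s, G i (X i s @^-1` [set true]))
  (hX : forall i, cond_iid_bernoulli P (Gs i) (f i) (X i)) (hGsT : forall i, Gs i setT)
  (hf : forall i, bounded_measurable (f i)) (hfmean : forall i, Rintegral P setT (f i) = F)
  (hfsqr : forall i, Rintegral P setT (fun w => f i w ^+ 2) = Q2).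
Hypotheses (hM : (0 < M)%N) (hN : (0 < N)%N).

Local Notation E g := (Rintegral P setT g).
Local Notation Y p w := ((X p.1 p.2 w)%:R : R).

Definition sample_mean w : R :=
  (M%:R * N%:R)^-1 * \sum_(i < M) \sum_(s < N) (X i s w)%:R.

Lemma bounded_measurable_sample (p : 'I_M * 'I_N) : bounded_measurable (fun w => Y p w).
Proof. exact: bounded_measurable_bool. Qed.

Lemma bounded_measurable_sample_mean : bounded_measurable sample_mean.
Proof.
apply: bounded_measurableM; first exact: bounded_measurable_cst.
by do 2 apply: bounded_measurable_sum => ?; exact: bounded_measurable_bool.
Qed.

Lemma Rintegral_sample (p : 'I_M * 'I_N) : E (fun w => Y p w) = F.
Proof. by rewrite (cond_bernoulli_mean (hXm p.1) (@hX p.1) (hGsT p.1) (hf p.1)). Qed.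

Lemma Rintegral_sample_product (p q : 'I_M * 'I_N) : E (fun w => Y p w * Y q w) =
  if p.1 == q.1 then (if p.2 == q.2 then F else Q2) else F ^+ 2.
Proof.
case: p q => [i s] [j t] /=; case: eqP => [<-|/eqP ij].
  case: eqP => [<-|/eqP st]; last first.
    by rewrite (cond_bernoulli_pair (hXm i) (@hX i) (hGsT i) (hf i) st).
  rewrite -(Rintegral_sample (i, s)); apply: eq_Rintegral => w _ /=.
  by case: (X i s w); rewrite ?mulr1 ?mulr0.
have mA := hXm i s; have mB := hXm j t.
transitivity (fine (P (X i s @^-1` [set true] `&` X j t @^-1` [set true]))).
  rewrite -Rintegral_indic_probability; last exact: measurableI.
  apply: eq_Rintegral => w _; rewrite in_setI !mem_preimage_true.
  by case: (X i s w); case: (X j t w); rewrite ?mulr1 ?mulr0.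
rewrite (mutually_independent_pair hind hGT ij (@hGX i s) (@hGX j t)).
rewrite fineM ?probability_fin_num // -!Rintegral_indic_probability // expr2.
by congr (_ * _); [rewrite -(Rintegral_sample (i, s)) | rewrite -(Rintegral_sample (j, t))];
  apply: eq_Rintegral => w _; rewrite mem_preimage_true.
Qed.

Lemma Rintegral_sample_covariance (p q : 'I_M * 'I_N) :
  E (fun w => (Y p w - F) * (Y q w - F)) =
  if p.1 == q.1 then (if p.2 == q.2 then F - F ^+ 2 else Q2 - F ^+ 2) else 0.
Proof.
rewrite Rintegral_centered_product; try exact: bounded_measurable_sample.
rewrite !Rintegral_sample Rintegral_sample_product.
by case: ifP => _; [case: ifP => _|]; rewrite expr2; ring.
Qed.

Lemma sum_sample_covariance (p : 'I_M * 'I_N) :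
  \sum_q E (fun w => (Y p w - F) * (Y q w - F)) = F - Q2 + (Q2 - F ^+ 2) * N%:R.
Proof.
under eq_bigr do rewrite Rintegral_sample_covariance.
rewrite -(pair_bigA _ (fun j t =>
  if p.1 == j then (if p.2 == t then F - F ^+ 2 else Q2 - F ^+ 2) else 0)) /=.
rewrite (bigD1 p.1) //= eqxx.
rewrite [X in _ + X]big1 ?addr0; last by move=> j; rewrite eq_sym => /negbTE ->; apply: big1.
transitivity (\sum_(t < N) ((Q2 - F ^+ 2) + (if t == p.2 then F - Q2 else 0))).
  by apply: eq_bigr => t _; rewrite [t == _]eq_sym; case: ifP => _; ring.
rewrite big_split /= sumr_const card_ord (bigD1 p.2) //= eqxx.
rewrite big1 ?addr0 => [|t /negbTE -> //].
by rewrite mulr_natr addrC.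
Qed.

Lemma sample_mean_centered w :
  sample_mean w - F = (M%:R * N%:R)^-1 * \sum_(i < M) \sum_(s < N) ((X i s w)%:R - F).
Proof.
under [in RHS]eq_bigr do rewrite sumrB sumr_const card_ord.
rewrite /sample_mean sumrB sumr_const card_ord -mulrnA -[F *+ _]mulr_natr natrM.
by field; rewrite !pnatr_eq0 -!lt0n hM hN.
Qed.

Lemma sample_mean_variance :
  E (fun w => (sample_mean w - F) ^+ 2) = (F - Q2 + (Q2 - F ^+ 2) * N%:R) / (M%:R * N%:R).
Proof.
have hZ p : bounded_measurable (fun w => Y p w - F).
  by apply: bounded_measurableB; [exact: bounded_measurable_sample | exact: bounded_measurable_cst].
under eq_Rintegral do rewrite sample_mean_centered exprMn pair_bigA.
rewrite RintegralZl_bounded; last first.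
  by under eq_fun do rewrite expr2; apply: bounded_measurableM; exact: bounded_measurable_sum.
rewrite Rintegral_sqr_sum //.
under eq_bigr do rewrite sum_sample_covariance.
rewrite sumr_const card_prod !card_ord -[_ *+ (M * N)]mulr_natr natrM.
by field; rewrite !pnatr_eq0 -!lt0n hM hN.
Qed.

Lemma sample_mean_variance_le :
  E (fun w => (sample_mean w - F) ^+ 2) <= (Q2 - F ^+ 2) / M%:R + 1 / (4 * M%:R * N%:R).
Proof.
pose i0 : 'I_M := Ordinal hM.
have var_f : Q2 - F ^+ 2 = E (fun w => (f i0 w - F) * (f i0 w - F)).
  rewrite Rintegral_centered_product // hfmean -(hfsqr i0).
  by under [in RHS]eq_Rintegral do rewrite -expr2; ring.
have var_ge0 : 0 <= Q2 - F ^+ 2.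
  by rewrite var_f; apply: Rintegral_ge0 => w _; rewrite -expr2 sqr_ge0.
have m0 : 0 < M%:R :> R by rewrite ltr0n.
have n0 : 0 < N%:R :> R by rewrite ltr0n.
rewrite sample_mean_variance -subr_ge0.
have -> : (Q2 - F ^+ 2) / M%:R + 1 / (4 * M%:R * N%:R) -
          (F - Q2 + (Q2 - F ^+ 2) * N%:R) / (M%:R * N%:R) =
          ((Q2 - F ^+ 2) + (F - 2^-1) ^+ 2) / (M%:R * N%:R).
  by field; rewrite !gt_eqF.
by apply: divr_ge0; [rewrite addr_ge0 ?sqr_ge0 | rewrite mulr_ge0 ?ltW].
Qed.

End SampleMean.

Unset Implicit Arguments.
Set Strict Implicit.

Theorem corollary1
  (R : realType) (d : nat)
  (E : 'M[R[i]]_d -> 'M[R[i]]_d) (hE : is_channel E)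
  (z0 : 'cV[R[i]]_d) (hz0 : unit_vector z0)
  (M N : nat) (hM : (2 <= M)%N) (hN : (2 <= N)%N)
  (* Haar reference: W is Haar distributed on U(d) under Q *)
  (dQ : measure_display) (T' : measurableType dQ) (Q : probability T' R)
  (W : T' -> 'M[R[i]]_d) (hW : haar_rv Q W)
  (* the experiment *)
  (dP : measure_display) (T : measurableType dP) (P : probability T R)
  (V : 'I_M -> T -> 'M[R[i]]_d) (X : 'I_M -> 'I_N -> T -> bool)
  (hVU : forall i w, V i w \is unitarymx)
  (hVm : forall i, rmeas (V i))
  (hVid : forall i j, same_law P (V i) (V j))
  (hV4 : forall i, unitary_design 4 P Q (V i) W)
  (hXm : forall i s, measurable (X i s @^-1` [set true]))
  (hind : mutually_independent P (fun i : 'I_M =>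
            <<s sigmaY (V i) `|` [set X i s @^-1` [set true] | s in [set: 'I_N]] >>))
  (hX : forall i, cond_iid_bernoulli P (sigmaY (fun w => V i w *m z0))
                    (fun w => fE E (V i w *m z0)) (X i)) :
  let F := Rintegral Q setT (fun y => fE E (W y *m z0)) in
  let D2 := Rintegral Q setT (fun y => fE E (W y *m z0) ^+ 2) - F ^+ 2 in
  let Fhat := fun w => (M%:R * N%:R)^-1 *
                 \sum_(i < M) \sum_(s < N) ((X i s w : nat)%:R : R) in
  (forall eps : R, 0 < eps ->
     (P [set w | (eps <= `|Fhat w - F|)%R] <=
        (D2 / (M%:R * eps ^+ 2) + 1 / (4 * M%:R * N%:R * eps ^+ 2))%:E)%E) /\
  (forall eps delta : R, 0 < eps -> 0 < delta < 1 ->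
     D2 / M%:R + 1 / (4 * M%:R * N%:R) <= delta * eps ^+ 2 ->
     ((1 - delta)%:E <= P [set w | (`|Fhat w - F| <= eps)%R])%E).
Proof.
move=> F D2 Fhat.
have [K [A [hK _]]] := hE.
have [hWU [hWm _]] := hW.
have M_gt0 : (0 < M)%N := ltnW hM.
have N_gt0 : (0 < N)%N := ltnW hN.
have var_le : Rintegral P setT (fun w => (Fhat w - F) ^+ 2) <=
              D2 / M%:R + 1 / (4 * M%:R * N%:R).
  apply: (sample_mean_variance_le (f := fun i w => fE E (V i w *m z0))
    (Gs := fun i => sigmaY (fun w => V i w *m z0)) hXm hind _ _ hX) => //.
  - by move=> i; apply: sub_sigma_algebra; left; exact: sigmaY_setT.
  - by move=> i s; apply: sub_sigma_algebra; right; exists s.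
  - by move=> i; exact: sigmaY_setT.
  - by move=> i; exact: bounded_measurable_fE.
  - by move=> i; exact: design_fE_mean (hVU i) (hVm i) hWU hWm (hV4 i) _ _ _ hK.
  - by move=> i; exact: design_fE_sqr_mean (hVU i) (hVm i) hWU hWm (hV4 i) _ _ _ hK.
have hFhat : bounded_measurable Fhat := bounded_measurable_sample_mean R hXm.
split => [eps eps0 | eps delta eps0 _ hdelta].
  have -> : D2 / (M%:R * eps ^+ 2) + 1 / (4 * M%:R * N%:R * eps ^+ 2) =
            (D2 / M%:R + 1 / (4 * M%:R * N%:R)) / eps ^+ 2.
    by field; rewrite !gt_eqF ?exprn_gt0 ?ltr0n.
  exact: chebyshev_tail hFhat eps0 var_le.
apply: le_trans (chebyshev_concentration hFhat eps0 var_le).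
by rewrite lee_fin lerD2l lerN2 ler_pdivrMr ?exprn_gt0.
Qed.
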